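(* Let $q$ be a prime power and let $X$ be a polarity graph of the projective plane $PG(2,q)$ having $a$ absolute points (loops retained). Then every independent set $S$ of $X$ satisfies \[ |S|\le \frac{\sqrt q+\sqrt{q+4a\frac{q+\sqrt q+1}{q^2+q+1}}}{2\,\frac{q+\sqrt q+1}{q^2+q+1}}. \]
   Context: A polarity of $PG(2,q)$ is an incidence-preserving bijection $\sigma$ mapping points to lines and lines to points with $\sigma^2$ the identity (equivalently, an automorphism of order two of the point–line incidence graph of $PG(2,q)$ interchanging points and lines). The polarity graph $X$ has the $q^2+q+1$ points as vertices, with $x$ adjacent to $y$ iff $x$ is incident with the line $\sigma(y)$; a point $x$ with $x$ incident with $\sigma(x)$ is absolute and carries a loop. An independent set is a set of vertices no two distinct members of which are adjacent (absolute points may belong to it). *)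

From HB Require Import structures.
From mathcomp Require Import all_boot all_order all_algebra.
From mathcomp Require Import reals.
Set Implicit Arguments. Unset Strict Implicit. Unset Printing Implicit Defensive.
Import Order.TTheory GRing.Theory Num.Theory.
Local Open Scope ring_scope.

(* A point (resp. line) is a
   one-dimensional subspace of F^3, represented by its unique normalized
   spanning vector: nonzero, with first nonzero coordinate equal to 1. *)
Definition normalized (F : fieldType) (v : 'rV[F]_3) : bool :=
  (v != 0) &&
  [forall i : 'I_3,
     ([forall j : 'I_3, (j < i)%N ==> (v 0 j == 0)] && (v 0 i != 0))
       ==> (v 0 i == 1)].

Definition pvec (F : finFieldType) := {v : 'rV[F]_3 | normalized v}.
Definition point (F : finFieldType) : finType := pvec F.
Definition line (F : finFieldType) : finType := pvec F.

Definition incident (F : finFieldType) (x : point F) (l : line F) : bool :=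
  (val x *m (val l)^T) == 0.

Definition is_polarity (F : finFieldType)
  (sp : point F -> line F) (sl : line F -> point F) : Prop :=
  [/\ cancel sp sl, cancel sl sp &
      forall (x : point F) (l : line F), incident x l = incident (sl l) (sp x)].

Definition pol_adj (F : finFieldType) (sp : point F -> line F)
  (x y : point F) : bool := incident x (sp y).

Definition absolute_points (F : finFieldType) (sp : point F -> line F)
  : {set point F} := [set x | pol_adj sp x x].

Definition pol_independent (F : finFieldType) (sp : point F -> line F)
  (S : {set point F}) : Prop :=
  forall x y, x \in S -> y \in S -> x != y -> ~~ pol_adj sp x y.

From HB Require Import structures.
From mathcomp Require Import all_boot all_order all_algebra.
From mathcomp Require Import mxabelem.
From mathcomp Require Import reals.
From mathcomp Require Import ring lra zify.
Set Implicit Arguments. Unset Strict Implicit. Unset Printing Implicit Defensive.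
Import Order.TTheory GRing.Theory Num.Theory.
Local Open Scope ring_scope.

(* Let d(y) be the number of neighbours of the point y in S.  Every vertex of
   the polarity graph has q + 1 neighbours and two distinct vertices have
   exactly one common neighbour (the meet of their polar lines), so
   sum_y d(y) = |S|(q + 1) and sum_y d(y)^2 = |S|(q + |S|), while independence
   of S gives sum_(y in S) d(y) <= a.  Cauchy-Schwarz for the weights
   d(y) + sqrt q [y in S] over the q^2 + q + 1 points then yields
   b |S|^2 <= sqrt q |S| + a, and the bound is the positive root of this
   quadratic.  The incidence counts come from kernel dimensions: the points
   annihilated by a rank r matrix form a projective subspace with
   (q^(3 - r) - 1)/(q - 1) points. *)

Section Coordinates.
Variable F : fieldType.
Implicit Types (u v : 'rV[F]_3) (c : F).

Local Notation i0 := (@Ordinal 3 0 isT).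
Local Notation i1 := (@Ordinal 3 1 isT).
Local Notation i2 := (@Ordinal 3 2 isT).

Lemma ord3P (P : 'I_3 -> Prop) : P i0 -> P i1 -> P i2 -> forall i, P i.
Proof.
by move=> P0 P1 P2 [[|[|[|m]]] lt_i3] //; rewrite (bool_irrelevance lt_i3 isT).
Qed.

Lemma forall_ord3 (P : pred 'I_3) : [forall i, P i] = [&& P i0, P i1 & P i2].
Proof.
by apply/forallP/and3P => [Pi | [P0 P1 P2]]; [split; apply: Pi | apply: ord3P].
Qed.

Lemma row3_eq0 v : (v == 0) = [&& v 0 i0 == 0, v 0 i1 == 0 & v 0 i2 == 0].
Proof.
apply/eqP/and3P => [-> | [/eqP v0 /eqP v1 /eqP v2]]; first by rewrite !mxE.
by apply/rowP; apply: ord3P; rewrite mxE.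
Qed.

Definition lead_coord v : F :=
  if v 0 i0 != 0 then v 0 i0 else if v 0 i1 != 0 then v 0 i1 else v 0 i2.

Lemma normalizedE v : normalized v = (v != 0) && (lead_coord v == 1).
Proof.
rewrite /normalized /lead_coord !forall_ord3 /= row3_eq0.
by case: eqP => [->|_]; case: eqP => [->|_]; case: eqP => [->|_];
   rewrite ?eqxx //= ?andbT ?implybT.
Qed.

Lemma lead_coordZ c v : lead_coord (c *: v) = c * lead_coord v.
Proof.
rewrite /lead_coord !mxE; have [-> | nz_c] := eqVneq c 0; first by rewrite !mul0r eqxx.
by rewrite !mulf_eq0 (negbTE nz_c) /=; case: ifP => //; case: ifP.
Qed.

Lemma lead_coord_eq0 v : (lead_coord v == 0) = (v == 0).
Proof.
rewrite row3_eq0 /lead_coord.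
case: (eqVneq (v 0 i0) 0) => [->|/negPf ->] //.
by case: (eqVneq (v 0 i1) 0) => [->|/negPf ->]; rewrite ?eqxx.
Qed.

Definition normalize v := (lead_coord v)^-1 *: v.

Lemma normalize_normalized v : v != 0 -> normalized (normalize v).
Proof.
move=> nz_v; have nz_lv : lead_coord v != 0 by rewrite lead_coord_eq0.
rewrite normalizedE scaler_eq0 negb_or invr_eq0 nz_lv nz_v /=.
by rewrite lead_coordZ mulVf.
Qed.

Lemma normalizeK v : v != 0 -> lead_coord v *: normalize v = v.
Proof. by move=> nz_v; rewrite scalerA mulfV ?scale1r ?lead_coord_eq0. Qed.

Lemma normalized_neq0 v : normalized v -> v != 0.
Proof. by rewrite normalizedE => /andP[]. Qed.

Lemma normalized_scale_eq c u v : normalized u -> normalized v -> u = c *: v -> u = v.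
Proof.
rewrite !normalizedE => /andP[_ /eqP lu1] /andP[_ /eqP lv1] def_u.
by move: lu1; rewrite def_u lead_coordZ lv1 mulr1 => ->; rewrite scale1r.
Qed.

Lemma normalized_submx u v : normalized u -> normalized v -> (u <= v)%MS = (u == v).
Proof.
move=> nu nv; apply/sub_rVP/eqP => [[c def_u] | ->]; last by exists 1; rewrite scale1r.
exact: normalized_scale_eq def_u.
Qed.

End Coordinates.

Section ProjectivePlane.
Variable F : finFieldType.
Local Notation q := #|F|.

Lemma card_field_gt1 : (1 < q)%N.
Proof. by apply/card_gt1P; exists 0, 1; rewrite !inE eq_sym oner_neq0. Qed.

Lemma card_nonzero_scale_invariant (P : pred 'rV[F]_3) :
    (forall c v, c != 0 -> P (c *: v) = P v) ->
  #|[set v | (v != 0) && P v]| = (q.-1 * #|[set x : point F | P (val x)]|)%N.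
Proof.
move=> PZ; rewrite -(cardsC1 0) -cardsX.
pose scale_point (cx : F * point F) := cx.1 *: val cx.2.
have nz_x (x : point F) : val x != 0 := normalized_neq0 (valP x).
rewrite -(@card_in_imset _ _ scale_point); last first.
  move=> [c x] [c' x']; rewrite !inE /= => /andP[nz_c _] /andP[_ _].
  rewrite /scale_point /= => eq_cx.
  have def_x : val x = (c^-1 * c') *: val x'.
    by rewrite -scalerA -eq_cx scalerA mulVf ?scale1r.
  have eq_xx' : x = x' by exact/val_inj/(normalized_scale_eq (valP x) (valP x') def_x).
  subst x'; congr (_, _); apply/eqP; rewrite -subr_eq0.
  have : (c - c') *: val x == 0 by rewrite scalerBl eq_cx subrr.
  by rewrite scaler_eq0 (negbTE (nz_x x)) orbF.
apply: eq_card => v; rewrite inE; apply/andP/imsetP => [[nz_v Pv] | [[c x]]].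
  exists (lead_coord v, Sub (normalize v) (normalize_normalized nz_v)).
    by rewrite !inE /= lead_coord_eq0 nz_v /normalize PZ // invr_eq0 lead_coord_eq0.
  by rewrite /scale_point /= normalizeK.
rewrite !inE /= => /andP[nz_c Px] ->; rewrite /scale_point /= PZ //.
by rewrite scaler_eq0 negb_or nz_c nz_x.
Qed.

Lemma card_kernel_points m (A : 'M[F]_(3, m)) :
  #|[set x : point F | val x *m A == 0]| = (\sum_(i < 3 - \rank A) q ^ i)%N.
Proof.
have q1_gt0 : (0 < q.-1)%N by rewrite -subn1 subn_gt0 card_field_gt1.
apply/eqP; rewrite -(eqn_pmul2l q1_gt0) -predn_exp.
rewrite -(card_nonzero_scale_invariant (P := fun v => v *m A == 0)); last first.
  by move=> c v nz_c; rewrite -scalemxAl scaler_eq0 (negbTE nz_c).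
rewrite -mxrank_ker -card_rowg [#|rowg _|](cardsD1 0) mem_rowg sub0mx /=.
by apply/eqP; apply: eq_card => v; rewrite !inE sub_kermx.
Qed.

Lemma card_points : #|{: point F}| = (q ^ 2 + q + 1)%N.
Proof.
rewrite -cardsT (_ : setT = [set x : point F | val x *m (0 : 'M_(3, 1)) == 0]).
  by rewrite card_kernel_points mxrank0 !big_ord_recr big_ord0 /= expn0 expn1; lia.
by apply/setP => x; rewrite !inE mulmx0 eqxx.
Qed.

Lemma card_line_points (l : line F) : #|[set x : point F | incident x l]| = q.+1.
Proof.
rewrite card_kernel_points mxrank_tr rank_rV normalized_neq0 ?(valP l) //=.
by rewrite !big_ord_recr big_ord0 /= expn0 expn1.
Qed.

Lemma rank_two_lines (l1 l2 : line F) : l1 != l2 -> \rank (col_mx (val l1) (val l2)) = 2%N.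
Proof.
move=> neq_l12; apply/eqP; rewrite eqn_leq rank_leq_row -addsmxE /=.
have lt_l2 : (val l2 < val l1 + val l2)%MS.
  by rewrite ltmxE addsmxSr addsmx_sub normalized_submx ?(valP l1) ?(valP l2) ?val_eqE
    ?(negbTE neq_l12).
by rewrite (leq_trans _ (rank_ltmx lt_l2)) // rank_rV normalized_neq0 ?(valP l2).
Qed.

Lemma card_meet_points (l1 l2 : line F) : l1 != l2 ->
  #|[set x : point F | incident x l1 && incident x l2]| = 1%N.
Proof.
move=> neq_l12.
rewrite (_ : [set x | _] = [set x : point F | val x *m (col_mx (val l1) (val l2))^T == 0]).
  by rewrite card_kernel_points mxrank_tr rank_two_lines // big_ord1.
by apply/setP => x; rewrite !inE tr_col_mx mul_mx_row row_mx_eq0.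
Qed.

End ProjectivePlane.

Lemma sqr_sum_le_card (R : realDomainType) (I : finType) (g : I -> R) :
  (\sum_i g i) ^+ 2 <= #|I|%:R * \sum_i g i ^+ 2.
Proof.
set G := \sum_i g i; set Q := \sum_i g i ^+ 2.
have sum_sqr_diff i : \sum_j (g i - g j) ^+ 2 = g i ^+ 2 *+ #|I| - (g i * G) *+ 2 + Q.
  rewrite (eq_bigr _ (fun j _ => sqrrB (g i) (g j))) big_split sumrB sumr_const /=.
  by rewrite sumrMnl -mulr_sumr.
have : 0 <= \sum_i \sum_j (g i - g j) ^+ 2.
  by apply: sumr_ge0 => i _; apply: sumr_ge0 => j _; apply: sqr_ge0.
rewrite (eq_bigr _ (fun i _ => sum_sqr_diff i)) !big_split /= sumrN sumr_const.
rewrite !sumrMnl -mulr_suml -/G -/Q mulr2n -[Q *+ #|I|]mulr_natl expr2.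
lra.
Qed.

Lemma sum_nat_of_bool (I : finType) (P : pred I) : (\sum_i P i = #|[set i | P i]|)%N.
Proof. by rewrite -sum1dep_card [RHS]big_mkcond; apply: eq_bigr => i _; case: (P i). Qed.

Section OneCommonNeighbour.
Variables (T : finType) (adj : rel T) (k : nat).
Hypothesis card_nbhd : forall x, #|[set y | adj x y]| = k.+1.
Hypothesis card_common_nbhd :
  forall x x', x != x' -> #|[set y | adj x y && adj x' y]| = 1%N.
Variable S : {set T}.
Hypothesis S_indep : {in S &, forall x y, x != y -> ~~ adj x y}.

Definition degS y := (\sum_(x in S) adj x y)%N.

Lemma sum_degS : (\sum_y degS y = #|S| * k.+1)%N.
Proof.
rewrite exchange_big -sum_nat_const /=; apply: eq_bigr => x _.
by rewrite sum_nat_of_bool card_nbhd.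
Qed.

Lemma sum_degS_sqr : (\sum_y degS y ^ 2 = #|S| * (k + #|S|))%N.
Proof.
have sum_adj2 x x' : (\sum_y adj x y * adj x' y = #|[set y | adj x y && adj x' y]|)%N.
  by rewrite -sum_nat_of_bool; apply: eq_bigr => y _; rewrite mulnb.
under eq_bigr do rewrite expnS expn1 big_distrlr /=.
rewrite exchange_big -sum_nat_const /=; apply: eq_bigr => x Sx.
rewrite exchange_big (bigD1 x) //= sum_adj2.
under eq_finset do rewrite andbb.
rewrite card_nbhd (eq_bigr (fun _ => 1%N)); last first.
  by move=> x' /andP[_ neq_x'x]; rewrite sum_adj2 card_common_nbhd // eq_sym.
rewrite sum1_card (cardD1 x S) Sx addSnnS; congr (k + _.+1)%N.
by apply: eq_card => y; rewrite !inE andbC.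
Qed.

Lemma sum_degS_in_S : (\sum_(y in S) degS y = #|[set y in S | adj y y]|)%N.
Proof.
rewrite -sum1dep_card big_mkcond [RHS]big_mkcond /=; apply: eq_bigr => y _.
case: ifP => // Sy; rewrite /degS (bigD1 y) //= big1 ?addn0; first by case: (adj y y).
by move=> x /andP[Sx neq_xy]; rewrite (negbTE (S_indep Sx Sy neq_xy)).
Qed.

Lemma degS_weighted_bound (R : realDomainType) (t : R) :
  (#|S|%:R * (k.+1%:R + t)) ^+ 2 <=
  #|T|%:R * (#|S|%:R * (k%:R + #|S|%:R + t ^+ 2)
             + 2 * t * #|[set y in S | adj y y]|%:R).
Proof.
pose w y : R := (degS y)%:R + t * (y \in S)%:R.
have sum_in_S (f : T -> R) : \sum_y f y * (y \in S)%:R = \sum_(y in S) f y.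
  by rewrite [RHS]big_mkcond; apply: eq_bigr => y _; case: (y \in S); rewrite ?mulr1 ?mulr0.
have sum_w : \sum_y w y = #|S|%:R * (k.+1%:R + t).
  rewrite big_split /= -natr_sum sum_degS -mulr_sumr -natr_sum sum_nat_of_bool cardsE.
  by rewrite natrM; ring.
have sum_w2 : \sum_y w y ^+ 2 =
    #|S|%:R * (k%:R + #|S|%:R + t ^+ 2) + 2 * t * #|[set y in S | adj y y]|%:R.
  have w2E y : w y ^+ 2 = (degS y ^ 2)%:R + (2 * t * (degS y)%:R + t ^+ 2) * (y \in S)%:R.
    by rewrite /w natrX; case: (y \in S) => /=; ring.
  rewrite (eq_bigr _ (fun y _ => w2E y)) big_split /= sum_in_S big_split /= sumr_const.
  rewrite -!natr_sum -mulr_sumr -natr_sum sum_degS_sqr sum_degS_in_S natrM natrD; ring.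
by have := sqr_sum_le_card w; rewrite sum_w sum_w2.
Qed.

End OneCommonNeighbour.

Lemma le_quadratic_root (R : rcfType) (a b r x : R) :
  0 < b -> b * x ^+ 2 <= r * x + a -> x <= (r + Num.sqrt (r ^+ 2 + 4 * a * b)) / (2 * b).
Proof.
move=> b_gt0 quad_le0; rewrite ler_pdivlMr ?mulr_gt0 // -lerBlDl.
have sqr_le : (x * (2 * b) - r) ^+ 2 <= r ^+ 2 + 4 * a * b.
  rewrite -subr_ge0 (_ : _ - _ = 4 * b * (r * x + a - b * x ^+ 2)); last by ring.
  by rewrite mulr_ge0 ?subr_ge0 // mulr_ge0 // ltW.
by rewrite (le_trans (ler_norm _)) // -sqrtr_sqr ler_sqrt // (le_trans (sqr_ge0 _) sqr_le).
Qed.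

Section PolarityGraph.
Variables (F : finFieldType) (sp : point F -> line F) (sl : line F -> point F).
Hypothesis sigma_polarity : is_polarity sp sl.

Lemma pol_adj_sym : symmetric (pol_adj sp).
Proof. by case: sigma_polarity => spK _ inc x y; rewrite /pol_adj inc spK. Qed.

Lemma card_pol_nbhd x : #|[set y | pol_adj sp x y]| = #|F|.+1.
Proof.
by rewrite -(card_line_points (sp x)); apply: eq_card => y; rewrite !inE pol_adj_sym.
Qed.

Lemma card_pol_common_nbhd x x' : x != x' ->
  #|[set y | pol_adj sp x y && pol_adj sp x' y]| = 1%N.
Proof.
case: sigma_polarity => spK _ _ neq_xx'.
rewrite -(@card_meet_points _ (sp x) (sp x')); last by rewrite (can_eq spK).
by apply: eq_card => y; rewrite !inE !(pol_adj_sym x) (pol_adj_sym x').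
Qed.

End PolarityGraph.

Unset Implicit Arguments.
Theorem mainTheorem9 (R : realType) (F : finFieldType)
  (sp : point F -> line F) (sl : line F -> point F)
  (Hpol : is_polarity sp sl) (S : {set point F}) :
  pol_independent sp S ->
  let q : R := (#|F|)%:R in
  let a : R := (#|absolute_points sp|)%:R in
  let b : R := (q + Num.sqrt q + 1) / (q ^+ 2 + q + 1) in
  (#|S|)%:R <= (Num.sqrt q + Num.sqrt (q + 4 * a * b)) / (2 * b).
Proof.
move=> S_indep; cbv zeta.
set q : R := #|F|%:R; set r := Num.sqrt q; set a : R := #|absolute_points sp|%:R.
set b : R := (q + r + 1) / _; set s : R := #|S|%:R.
set A : R := #|[set y in S | pol_adj sp y y]|%:R.
have q_gt0 : 0 < q by rewrite ltr0n (ltn_trans _ (card_field_gt1 F)).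
have r_gt0 : 0 < r by rewrite sqrtr_gt0.
have sqr_r : r ^+ 2 = q by rewrite sqr_sqrtr // ltW.
have npoints_gt0 : 0 < q ^+ 2 + q + 1 by rewrite !addr_gt0 ?exprn_gt0.
have b_gt0 : 0 < b by apply: divr_gt0 => //; lra.
have A_le_a : A <= a.
  by rewrite ler_nat subset_leq_card //; apply/subsetP => y; rewrite !inE => /andP[].
have := degS_weighted_bound (card_pol_nbhd Hpol) (card_pol_common_nbhd Hpol) S_indep r.
rewrite card_points -/s -/A -addn1 !natrD natrX -/q => weighted.
have bound_A : (q + r + 1) * s ^+ 2 <= (q ^+ 2 + q + 1) * (r * s + A).
  have expand : 2 * r * ((q ^+ 2 + q + 1) * (r * s + A) - (q + r + 1) * s ^+ 2) =
      (q ^+ 2 + q + 1) * (s * (q + s + r ^+ 2) + 2 * r * A) - (s * (q + 1 + r)) ^+ 2.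
    by rewrite -sqr_r; ring.
  by rewrite -subr_ge0 -(@pmulr_rge0 _ (2 * r)) ?expand ?subr_ge0 //; lra.
have bound_a : b * s ^+ 2 <= r * s + a.
  rewrite mulrAC ler_pdivrMr //; apply: (le_trans bound_A).
  by rewrite [X in _ <= X]mulrC ler_pM2l // lerD2l.
by have := le_quadratic_root b_gt0 bound_a; rewrite sqr_r.
Qed.
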